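(* Let $G$ be a well-bicovered graph with adjacent vertices $u$ and $v$, and let $H$ be a bipartite graph (disjoint from $G$) with adjacent vertices $u'$ and $v'$. Let $F$ be the graph formed from the disjoint union of $G$ and $H$ by identifying $u$ with $u'$ and $v$ with $v'$. Then $F$ is well-bicovered.
   Context: All graphs are finite and simple; ''subgraph'' means induced subgraph. A graph is well-bicovered if every vertex-inclusion-maximal induced bipartite subgraph has the same order. *)

(* Simple graphs: symmetric irreflexive relations on a finType. *)
From mathcomp Require Import all_boot.
Set Implicit Arguments. Unset Strict Implicit. Unset Printing Implicit Defensive.

Definition bipartite_set (T : finType) (e : rel T) (S : {set T}) : Prop :=
  exists c : T -> bool, forall x y, x \in S -> y \in S -> e x y -> c x != c y.

Definition bipartite_graph (T : finType) (e : rel T) : Prop :=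
  bipartite_set e [set: T].

Definition maximal_bipartite_set (T : finType) (e : rel T) (S : {set T}) : Prop :=
  bipartite_set e S /\
  (forall S' : {set T}, S \subset S' -> bipartite_set e S' -> S' = S).

Definition well_bicovered (T : finType) (e : rel T) : Prop :=
  forall S1 S2 : {set T}, maximal_bipartite_set e S1 -> maximal_bipartite_set e S2 ->
    #|S1| = #|S2|.

(* Gluing: vertices of F are those of G together with the vertices of H other
   than u', v' (u' is identified with u, v' with v). *)
Definition hrest (VH : finType) (u' v' : VH) := {x : VH | (x != u') && (x != v')}.

Definition glue_vertex (VG VH : finType) (u' v' : VH) : finType :=
  (VG + hrest u' v')%type.

Definition glue_edge (VG VH : finType) (eG : rel VG) (eH : rel VH)
  (u v : VG) (u' v' : VH) : rel (glue_vertex VG u' v') :=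
  fun x y =>
    match x, y with
    | inl a, inl b => eG a b
    | inr a, inr b => eH (val a) (val b)
    | inl a, inr b => ((a == u) && eH u' (val b)) || ((a == v) && eH v' (val b))
    | inr a, inl b => ((b == u) && eH (val a) u') || ((b == v) && eH (val a) v')
    end.

(* A 2-colouring of the bipartite graph H can be flipped so that it agrees at
   u', v' with any proper colouring of a bipartite set A of G at u, v: when both
   u and v lie in A they are adjacent, so their colours differ, as do those of
   u' and v'.  Hence every vertex of H other than u', v' can be added to any
   bipartite set of F, so a maximal bipartite set S of F consists of all of
   them together with its trace on G, and that trace is maximal bipartite in G.
   Thus |S| = |S ∩ G| + |H| - 2, and well-bicoveredness passes from G to F. *)
From mathcomp Require Import all_boot.

Set Implicit Arguments.
Unset Strict Implicit.
Unset Printing Implicit Defensive.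

Section Gluing.

Variables (VG VH : finType) (eG : rel VG) (eH : rel VH) (u v : VG) (u' v' : VH).

Local Notation V := (glue_vertex VG u' v').
Local Notation eF := (@glue_edge VG VH eG eH u v u' v').

Definition glue_ext (A : {set VG}) : {set V} :=
  [set x | if x is inl a then a \in A else true].

Definition glue_trace (S : {set V}) : {set VG} := [set a | inl a \in S].

Lemma glue_traceK (A : {set VG}) : glue_trace (glue_ext A) = A.
Proof. by apply/setP => a; rewrite !inE. Qed.

Lemma sub_glue_ext_trace (S : {set V}) : S \subset glue_ext (glue_trace S).
Proof. by apply/subsetP => -[a|z]; rewrite !inE. Qed.

Lemma glue_extS (A B : {set VG}) :
  A \subset B -> glue_ext A \subset glue_ext B.
Proof.
by move=> /subsetP sAB; apply/subsetP => -[a|z]; rewrite !inE // => /sAB.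
Qed.

Lemma bipartite_glue_trace (S : {set V}) :
  bipartite_set eF S -> bipartite_set eG (glue_trace S).
Proof.
case=> c c_ok; exists (fun a => c (inl a)) => a b.
by rewrite !inE; exact: (c_ok (inl a) (inl b)).
Qed.

Lemma card_glue_ext (A : {set VG}) :
  #|glue_ext A| = #|A| + #|[set: hrest u' v']|.
Proof.
have -> : glue_ext A = inl @: A :|: inr @: [set: hrest u' v'].
  apply/setP => -[a|z]; rewrite !inE.
    rewrite mem_imset; last exact: inl_inj.
    have /negbTE-> : inl a \notin inr @: [set: hrest u' v'].
      by apply/imsetP => -[].
    by rewrite orbF.
  by symmetry; apply/orP; right; apply: imset_f.
have disj : inl @: A :&: inr @: [set: hrest u' v'] = set0.
  by apply/setP => x; rewrite !inE; apply/andP => -[/imsetP[a _ ->] /imsetP[]].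
by rewrite cardsU disj cards0 subn0 !card_imset //; move=> x y [].
Qed.

Hypotheses (eG_uv : eG u v) (eH_u'v' : eH u' v') (bipH : bipartite_graph eH).

Lemma bipartite_glue_ext (A : {set VG}) :
  bipartite_set eG A -> bipartite_set eF (glue_ext A).
Proof.
case=> c c_ok; case: bipH => d d_ok.
have dH x y : eH x y -> d x != d y by apply: d_ok; rewrite inE.
pose b := if u \in A then c u (+) d u' else c v (+) d v'.
pose d' z := d z (+) b.
have d'H x y : eH x y -> d' x != d' y.
  by move=> /dH; rewrite (inj_eq (@addIb b)).
have d'u : u \in A -> c u = d' u'.
  by move=> uA; rewrite /d' /b uA addbC addbK.
have d'v : v \in A -> c v = d' v'.
  move=> vA; rewrite /d' /b; case: ifP => uA; last by rewrite addbC addbK.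
  have : c u != c v by exact: c_ok.
  move: (dH _ _ eH_u'v').
  by case: (c u); case: (c v); case: (d u'); case: (d v').
exists (fun x : V => match x with inl a => c a | inr z => d' (val z) end).
move=> [a|z] [a'|z'] /=; rewrite !inE /= => Ha Ha'.
- exact: c_ok.
- case/orP => /andP[/eqP Ea E]; subst a.
  + by rewrite d'u // d'H.
  + by rewrite d'v // d'H.
- case/orP => /andP[/eqP Ea E]; subst a'.
  + by rewrite d'u // d'H.
  + by rewrite d'v // d'H.
- exact: d'H.
Qed.

Lemma maximal_glue_extE (S : {set V}) :
  maximal_bipartite_set eF S -> glue_ext (glue_trace S) = S.
Proof.
case=> bipS maxS; apply: maxS; first exact: sub_glue_ext_trace.
by apply: bipartite_glue_ext; apply: bipartite_glue_trace.
Qed.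

Lemma maximal_bipartite_glue_trace (S : {set V}) :
  maximal_bipartite_set eF S -> maximal_bipartite_set eG (glue_trace S).
Proof.
move=> maxS; have extS := maximal_glue_extE maxS.
case: maxS => bipS maxS; split; first exact: bipartite_glue_trace.
move=> A sSA bipA; rewrite -(glue_traceK A) (maxS (glue_ext A)) //.
  by rewrite -extS; apply: glue_extS.
exact: bipartite_glue_ext.
Qed.

End Gluing.

Theorem mainTheorem10 (VG VH : finType) (eG : rel VG) (eH : rel VH)
  (symG : symmetric eG) (irrG : irreflexive eG)
  (symH : symmetric eH) (irrH : irreflexive eH)
  (u v : VG) (u' v' : VH) :
  well_bicovered eG -> eG u v ->
  bipartite_graph eH -> eH u' v' ->
  well_bicovered (@glue_edge VG VH eG eH u v u' v').
Proof.
move=> wbG eG_uv bipH eH_u'v' S1 S2 maxS1 maxS2.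
have extE := maximal_glue_extE eG_uv eH_u'v' bipH.
have maxG := maximal_bipartite_glue_trace eG_uv eH_u'v' bipH.
rewrite -(extE _ maxS1) -(extE _ maxS2) !card_glue_ext.
by rewrite (wbG _ _ (maxG _ maxS1) (maxG _ maxS2)).
Qed.
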